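(* Every deterministic probabilistic automaton is leaktight.
   Context: Fix a finite alphabet $A$. A probabilistic automaton is $\mathcal{A}=(Q,q_0,\Delta,F)$ with $Q$ finite, $q_0\in Q$, $F\subseteq Q$, $\Delta:Q\times A\to\mathcal{D}(Q)$. It is deterministic if every $\Delta(q,a)$ assigns probability $1$ to a single state. For $a\in A$ let $M_a(s,t)=\Delta(s,a)(t)$, for $u=a_0\cdots a_{n-1}$ let $M_u=M_{a_0}\cdots M_{a_{n-1}}$ (identity for the empty word), and $\mathbb{P}_{\mathcal{A}}(s\xrightarrow{u}t)=M_u(s,t)$. A nonnegative $Q\times Q$ matrix $M$ is idempotent if $M(s,t)>0\iff M^2(s,t)>0$ for all $s,t$; a word $u$ is idempotent if $M_u$ is. A leak is a sequence $(u_n)$ of idempotent words such that $M_{u_n}$ converges to an idempotent matrix $M$ and there exist states $r,q$, both recurrent in the Markov chain with transition matrix $M$, with $\lim_n\mathbb{P}_{\mathcal{A}}(r\xrightarrow{u_n}q)=0$ and $\mathbb{P}_{\mathcal{A}}(r\xrightarrow{u_n}q)>0$ for all $n$. $\mathcal{A}$ is leaktight if it has no leak. *)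

From HB Require Import structures.
From mathcomp Require Import all_boot all_order all_algebra.
From mathcomp Require Import all_classical all_reals topology normedtype sequences.
Set Implicit Arguments. Unset Strict Implicit. Unset Printing Implicit Defensive.
Import Order.TTheory GRing.Theory Num.Theory.
Import numFieldNormedType.Exports.
Local Open Scope classical_set_scope.
Local Open Scope ring_scope.

(* A probabilistic automaton over the finite alphabet A with state set
   Q = 'I_n.+1 (any finite nonempty set of states, up to renaming).
   delta a is the transition matrix M_a : M_a s t = Delta(s,a)(t). *)
Record pautomaton (R : realType) (A : finType) (n : nat) := PAutomaton {
  pa_init : 'I_n.+1;
  pa_final : {set 'I_n.+1};
  pa_delta : A -> 'M[R]_n.+1;
  pa_delta_ge0 : forall a s t, 0 <= pa_delta a s t;
  pa_delta_sum1 : forall a s, \sum_t pa_delta a s t = 1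
}.

Definition deterministic R A n (P : pautomaton R A n) : Prop :=
  forall (q : 'I_n.+1) (a : A), exists t : 'I_n.+1, pa_delta P a q t = 1.

Definition mxword R A n (P : pautomaton R A n) (u : seq A) : 'M[R]_n.+1 :=
  foldr (fun a M => pa_delta P a *m M) 1%:M u.

Definition prob R A n (P : pautomaton R A n) (s : 'I_n.+1) (u : seq A)
  (t : 'I_n.+1) : R := mxword P u s t.

Definition idempotent_mx (R : realType) n (M : 'M[R]_n.+1) : Prop :=
  forall s t, (0 < M s t) <-> (0 < (M *m M) s t).

Definition idempotent_word R A n (P : pautomaton R A n) (u : seq A) : Prop :=
  idempotent_mx (mxword P u).

Definition mx_reach (R : realType) n (M : 'M[R]_n.+1) (s t : 'I_n.+1) : Prop :=
  exists k : nat, 0 < (M ^+ k) s t.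

Definition mx_recurrent (R : realType) n (M : 'M[R]_n.+1) (s : 'I_n.+1) : Prop :=
  forall t, mx_reach M s t -> mx_reach M t s.

Definition mx_cvg (R : realType) n (U : nat -> 'M[R]_n.+1) (M : 'M[R]_n.+1) : Prop :=
  forall s t, (fun k => U k s t) @ \oo --> M s t.

Definition is_leak R A n (P : pautomaton R A n) (u : nat -> seq A) : Prop :=
  (forall k, idempotent_word P (u k)) /\
  exists M : 'M[R]_n.+1,
    [/\ mx_cvg (fun k => mxword P (u k)) M,
        idempotent_mx M &
        exists r q : 'I_n.+1,
          [/\ mx_recurrent M r, mx_recurrent M q,
              (fun k => prob P r (u k) q) @ \oo --> (0 : R) &
              forall k, 0 < prob P r (u k) q]].

Definition leaktight R A n (P : pautomaton R A n) : Prop :=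
  ~ exists u : nat -> seq A, is_leak P u.

From mathcomp Require Import all_boot all_order all_algebra.
From mathcomp Require Import all_classical all_reals topology normedtype sequences.
Set Implicit Arguments. Unset Strict Implicit. Unset Printing Implicit Defensive.

Import Order.TTheory GRing.Theory Num.Theory.
Import numFieldNormedType.Exports.
Local Open Scope classical_set_scope.
Local Open Scope ring_scope.

(* In a deterministic automaton every M_u is a 0/1 matrix, so a transition
   probability that stays positive is constantly 1 and cannot tend to 0. *)

Lemma stochastic_row_eq_delta (R : numDomainType) (I : finType) (f : I -> R)
    (t : I) :
  (forall i, 0 <= f i) -> \sum_i f i = 1 -> f t = 1 ->
  forall i, f i = (i == t)%:R.
Proof.
move=> f_ge0 f_sum1 ft1 i.
have rest0 : \sum_(j | j != t) f j = 0.
  by move: f_sum1; rewrite (bigD1 t) //= ft1 -{2}[1]addr0 => /addrI.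
case: eqP => [-> // | /eqP neq_it].
exact: (psumr_eq0P (fun j _ => f_ge0 j) rest0).
Qed.

Section Deterministic.

Variables (R : realType) (A : finType) (n : nat) (P : pautomaton R A n).
Hypothesis P_det : deterministic P.

Lemma deterministic_delta a s :
  exists t, forall j, pa_delta P a s j = (j == t)%:R.
Proof.
have [t Pst] := P_det s a; exists t.
exact: stochastic_row_eq_delta (pa_delta_ge0 P a s) (pa_delta_sum1 P a s) Pst.
Qed.

Lemma deterministic_mxword u s :
  exists t, forall j, mxword P u s j = (j == t)%:R.
Proof.
elim: u s => [|a u IHu] s.
  by exists s => j; rewrite /mxword /= mxE eq_sym.
have [f Psf] := deterministic_delta a s; have [t Pft] := IHu f.
exists t => j; rewrite /mxword /= mxE (bigD1 f) //= big1 ?addr0.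
  by rewrite Psf eqxx mul1r Pft.
by move=> i /negPf neq_if; rewrite Psf neq_if mul0r.
Qed.

Lemma deterministic_prob_pos u s t : 0 < prob P s u t -> prob P s u t = 1.
Proof.
have [t' Pst'] := deterministic_mxword u s; rewrite /prob Pst'.
by case: (t == t'); rewrite ?ltxx.
Qed.

End Deterministic.

(* The ascription [(0 : R)] makes the limit the ring zero used in [is_leak]
   rather than the zero of the normed-module structure, so that the lemma
   applies to [is_leak] by cheap unification. *)
Lemma cvg_one_neq0 (R : realType) (v : nat -> R) :
  (forall k, v k = 1) -> ~ (v @ \oo --> (0 : R)).
Proof.
move=> v1 v_cvg0.
have v_cvg1 : v @ \oo --> (1 : R) by rewrite (funext v1); exact: cvg_cst.
have zero_eq_one : (0 : R) = 1 := cvg_unique (@Rhausdorff R) v_cvg0 v_cvg1.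
by move: (oner_neq0 R); rewrite -zero_eq_one eqxx.
Qed.

Theorem proposition4p2 (R : realType) (A : finType) (n : nat)
  (P : pautomaton R A n) :
  deterministic P -> leaktight P.
Proof.
move=> P_det [u [_ [M [_ _ [r [q [_ _ prob_cvg0 prob_pos]]]]]]].
have prob_eq1 k : prob P r (u k) q = 1 := deterministic_prob_pos P_det (prob_pos k).
exact: (@cvg_one_neq0 R (fun k => prob P r (u k) q) prob_eq1 prob_cvg0).
Qed.
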